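(* Let $\Psi_{\text{pt}}$ and $\Psi_{\text{tg}}$ be two $L$-layer Kolmogorov--Arnold networks (KANs) with the same widths $n_1,\dots,n_{L+1}$ and the same basis functions $b_1,\dots,b_{n_d}$, with parameter tensors $\{\mathcal{A}_{\ell,\text{pt}}\}_{\ell\in[L]}$ and $\{\mathcal{A}_{\ell,\text{tg}}\}_{\ell\in[L]}$ respectively, $\mathcal{A}_{\ell,\cdot}\in\mathbb{R}^{n_\ell\times n_{\ell+1}\times n_d}$. Assume that each basis function $b_k:\mathbb{R}\to\mathbb{R}$ is smooth, satisfies $|b_k(z)|\le B$ for all $z$, and is Lipschitz with constant $L_b>0$, and that $\|\mathcal{A}_{\ell,\text{tg}}\|_F\le M$ and $\|\mathcal{A}_{\ell,\text{pt}}\|_F\le M$ for all $\ell\in[L]$, with $B,M>0$. Fix integers $1\le r_{\ell,1}\le n_\ell$, $1\le r_{\ell,2}\le n_{\ell+1}$, $1\le r_{\ell,3}\le n_d$ for each $\ell\in[L]$. Then there exist core tensors $\mathcal{G}_\ell\in\mathbb{R}^{r_{\ell,1}\times r_{\ell,2}\times r_{\ell,3}}$ and matrices $\bm{U}_\ell^{(1)}\in\mathbb{R}^{n_\ell\times r_{\ell,1}}$, $\bm{U}_\ell^{(2)}\in\mathbb{R}^{n_{\ell+1}\times r_{\ell,2}}$, $\bm{U}_\ell^{(3)}\in\mathbb{R}^{n_d\times r_{\ell,3}}$, $\ell\in[L]$, such that the KAN $\Psi_{\text{ft}}$ with parameter tensors $$\mathcal{A}_{\ell,\text{ft}}=\mathcal{A}_{\ell,\text{pt}}+\mathcal{G}_\ell\times_1\bm{U}_\ell^{(1)}\times_2\bm{U}_\ell^{(2)}\times_3\bm{U}_\ell^{(3)},\quad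 \ell\in[L],$$ satisfies, for every $\bm{x}\in\mathbb{R}^{n_1}$, $$\|\Psi_{\text{ft}}(\bm{x})-\Psi_{\text{tg}}(\bm{x})\|_2\le\sum_{\ell=1}^{L}C_\ell\Big(\sum_{r=r_{\ell,1}+1}^{n_\ell}\sigma_r(\bm{E}_\ell^{(1)})^2+\sum_{r=r_{\ell,2}+1}^{n_{\ell+1}}\sigma_r(\bm{E}_\ell^{(2)})^2+\sum_{r=r_{\ell,3}+1}^{n_d}\sigma_r(\bm{E}_\ell^{(3)})^2\Big)^{1/2},$$ where $C_\ell:=(M L_b\sqrt{n_d})^{L-\ell}\cdot B\sqrt{n_\ell n_d}$.
   Context: A KAN of depth $L$ with widths $n_1,\dots,n_{L+1}$, basis functions $b_1,\dots,b_{n_d}:\mathbb{R}\to\mathbb{R}$ and parameter tensors $\mathcal{A}_\ell=(a_{\ell,p,q,k})\in\mathbb{R}^{n_\ell\times n_{\ell+1}\times n_d}$ is the map $\Psi:\mathbb{R}^{n_1}\to\mathbb{R}^{n_{L+1}}$, $\Psi(\bm{x})=\bm{z}_{L+1}$, where $\bm{z}_1=\bm{x}$ and $z_{\ell+1,q}=\sum_{p=1}^{n_\ell}\sum_{k=1}^{n_d}a_{\ell,p,q,k}\,b_k(z_{\ell,p})$ for $q\in[n_{\ell+1}]$, $\ell\in[L]$. The mode products are defined by $(\mathcal{G}\times_1\bm{U}^{(1)}\times_2\bm{U}^{(2)}\times_3\bm{U}^{(3)})_{i,j,k}=\sum_{a,b,c}g_{a,b,c}U^{(1)}_{i,a}U^{(2)}_{j,b}U^{(3)}_{k,c}$.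 The error tensor is $\mathcal{E}_\ell=\mathcal{A}_{\ell,\text{tg}}-\mathcal{A}_{\ell,\text{pt}}$, and $\bm{E}_\ell^{(1)}\in\mathbb{R}^{n_\ell\times n_{\ell+1}n_d}$, $\bm{E}_\ell^{(2)}\in\mathbb{R}^{n_{\ell+1}\times n_\ell n_d}$, $\bm{E}_\ell^{(3)}\in\mathbb{R}^{n_d\times n_\ell n_{\ell+1}}$ are its mode-$i$ unfoldings (the matrix whose columns are the mode-$i$ fibers of $\mathcal{E}_\ell$). $\sigma_r(\cdot)$ denotes the $r$-th largest singular value (taken to be $0$ if $r$ exceeds the number of singular values). *)

From HB Require Import structures.
From mathcomp Require Import all_boot all_order all_algebra.
From mathcomp Require Import all_classical all_reals.
From mathcomp Require Import topology normedtype derive.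
From Stdlib Require Import ClassicalEpsilon.
Set Implicit Arguments. Unset Strict Implicit. Unset Printing Implicit Defensive.
Import Order.TTheory GRing.Theory Num.Theory.
Import numFieldNormedType.Exports.
Local Open Scope ring_scope.

Definition tensor (R : Type) (a b c : nat) := 'I_a -> 'I_b -> 'I_c -> R.

Section Defs.
Variable R : realType.

Definition smooth (f : R -> R) : Prop :=
  forall (k : nat) (x : R), derivable (derive1n k f) x 1.

Definition lipschitz_with (K : R) (f : R -> R) : Prop :=
  forall x y : R, `|f x - f y| <= K * `|x - y|.

Definition frob (a b c : nat) (T : tensor R a b c) : R :=
  Num.sqrt (\sum_(i < a) \sum_(j < b) \sum_(k < c) T i j k ^+ 2).

Definition norm2 (m : nat) (v : 'I_m -> R) : R :=
  Num.sqrt (\sum_(i < m) v i ^+ 2).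

Definition tucker (r1 r2 r3 m1 m2 m3 : nat) (G : tensor R r1 r2 r3)
  (U1 : 'M[R]_(m1, r1)) (U2 : 'M[R]_(m2, r2)) (U3 : 'M[R]_(m3, r3)) :
  tensor R m1 m2 m3 :=
  fun i j k => \sum_(a < r1) \sum_(b < r2) \sum_(c < r3)
                 G a b c * U1 i a * U2 j b * U3 k c.

Definition tadd (a b c : nat) (T S : tensor R a b c) : tensor R a b c :=
  fun i j k => T i j k + S i j k.
Definition tsub (a b c : nat) (T S : tensor R a b c) : tensor R a b c :=
  fun i j k => T i j k - S i j k.

Definition unfold1 (a b c : nat) (T : tensor R a b c) : 'M[R]_(a, b * c) :=
  \matrix_(i < a) mxvec (\matrix_(j < b, k < c) T i j k).
Definition unfold2 (a b c : nat) (T : tensor R a b c) : 'M[R]_(b, a * c) :=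
  \matrix_(j < b) mxvec (\matrix_(i < a, k < c) T i j k).
Definition unfold3 (a b c : nat) (T : tensor R a b c) : 'M[R]_(c, a * b) :=
  \matrix_(k < c) mxvec (\matrix_(i < a, j < b) T i j k).

Definition is_sv_seq (m n : nat) (A : 'M[R]_(m, n)) (d : nat -> R) : Prop :=
  (forall i, 0 <= d i) /\ (forall i j, (i <= j)%N -> d j <= d i) /\
  (forall i, (minn m n <= i)%N -> d i = 0) /\
  exists (U : 'M[R]_m) (V : 'M[R]_n),
    U *m U^T = 1%:M /\ V *m V^T = 1%:M /\
    A = U *m (\matrix_(i < m, j < n) (if (i : nat) == j then d i else 0))
          *m V^T.

Definition sv_seq (m n : nat) (A : 'M[R]_(m, n)) : nat -> R :=
  epsilon (inhabits (fun _ => 0)) (is_sv_seq A).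

(* sigma A r : the r-th largest singular value (1-based), 0 if r exceeds
   the number of singular values *)
Definition sigma (m n : nat) (A : 'M[R]_(m, n)) (r : nat) : R :=
  sv_seq A r.-1.

Definition kan_layer (nd p q : nat) (b : 'I_nd -> R -> R)
  (A : tensor R p q nd) (z : 'I_p -> R) : 'I_q -> R :=
  fun j => \sum_(i < p) \sum_(k < nd) A i j k * b k (z i).

(* layers are 0-based here: layer l maps R^(n l) to R^(n l.+1);
   z_0 = x and z_k is the input of layer k *)
Fixpoint kan_z (n : nat -> nat) (nd : nat) (b : 'I_nd -> R -> R)
  (A : forall l : nat, tensor R (n l) (n l.+1) nd) (x : 'I_(n 0) -> R)
  (k : nat) : 'I_(n k) -> R :=
  match k return 'I_(n k) -> R with
  | 0 => x
  | k'.+1 => kan_layer b (A k') (@kan_z n nd b A x k')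
  end.

Definition kan (L : nat) (n : nat -> nat) (nd : nat) (b : 'I_nd -> R -> R)
  (A : forall l : nat, tensor R (n l) (n l.+1) nd) (x : 'I_(n 0) -> R) :
  'I_(n L) -> R := @kan_z n nd b A x L.

End Defs.

Arguments kan {R} L {n nd} b A x _.

From HB Require Import structures.
From mathcomp Require Import all_boot all_order all_algebra.
From mathcomp Require Import all_classical all_reals.
From mathcomp Require Import topology normedtype derive.
From mathcomp Require Import matrix_normedtype.
From mathcomp Require Import ring lra.
From Stdlib Require Import ClassicalEpsilon.
Set Implicit Arguments. Unset Strict Implicit. Unset Printing Implicit Defensive.
Import Order.TTheory GRing.Theory Num.Theory.
Import numFieldNormedType.Exports.
Local Open Scope ring_scope.

(* The error of a KAN is controlled layer by layer: changing the parameters of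
   layer l moves its output by at most B sqrt(n_l n_d) times the Frobenius norm
   of the change, and a layer whose parameters have Frobenius norm at most M is
   Lipschitz with constant M L_b sqrt(n_d); hence the output error is at most
   sum_l C_l |A_ft,l - A_tg,l|_F.  Taking as update of layer l the truncated HOSVD
   of E_l (leading left singular vectors of its three unfoldings, and the
   matching core) makes A_ft,l - A_tg,l a truncation error.  After rotating by
   the full singular bases, which preserves the Frobenius norm, every entry removed
   by the truncation lies in a discarded slice of some mode, and the energy of
   the a-th slice of mode i is sigma_(a+1)(E^(i))^2.  The singular value
   decompositions are built variationally: a maximiser of |A v| on the unit
   sphere, together with Householder reflections, splits off the largest singular
   value. *)

Section SumOfSquares.
Variable R : rcfType.

Lemma sumr_sqr_ge0 (I : Type) (r : seq I) (P : pred I) (x : I -> R) :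
  0 <= \sum_(i <- r | P i) x i ^+ 2.
Proof. by apply: sumr_ge0 => i _; exact: sqr_ge0. Qed.

Lemma sumr_sqr_eq0 (I : finType) (x : I -> R) :
  \sum_i x i ^+ 2 = 0 -> forall i, x i = 0.
Proof.
move/eqP; rewrite psumr_eq0 => [/allP x0 i|i _]; last exact: sqr_ge0.
by apply/eqP; rewrite -sqrf_eq0; exact: x0 (mem_index_enum i).
Qed.

(* Lagrange's identity: twice the defect is the sum of the (x_i y_j - x_j y_i)^2. *)
Lemma cauchy_schwarz (I : finType) (x y : I -> R) :
  (\sum_i x i * y i) ^+ 2 <= (\sum_i x i ^+ 2) * (\sum_i y i ^+ 2).
Proof.
pose a i j := x i ^+ 2 * y j ^+ 2; pose c i j := x i * y i * (x j * y j).
have lagrange : \sum_i \sum_j (x i * y j - x j * y i) ^+ 2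
    = 2 * ((\sum_i x i ^+ 2) * (\sum_i y i ^+ 2) - (\sum_i x i * y i) ^+ 2).
  have expand i j : (x i * y j - x j * y i) ^+ 2 = a i j + a j i - 2 * c i j.
    by rewrite /a /c; ring.
  under eq_bigr => i _ do under eq_bigr => j _ do rewrite expand.
  under eq_bigr => i _ do rewrite sumrB big_split /=.
  rewrite sumrB big_split /= [\sum_i \sum_j a j i]exchange_big /=.
  have -> : \sum_i \sum_j 2 * c i j = 2 * \sum_i \sum_j c i j.
    by rewrite mulr_sumr; apply: eq_bigr => i _; rewrite mulr_sumr.
  by rewrite /a /c expr2 !big_distrlr /=; ring.
have : 0 <= \sum_i \sum_j (x i * y j - x j * y i) ^+ 2.
  by apply: sumr_ge0 => i _; exact: sumr_sqr_ge0.
by rewrite lagrange pmulr_rge0 // subr_ge0.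
Qed.

Lemma cauchy_schwarz2 (I J : finType) (x y : I -> J -> R) :
  (\sum_i \sum_j x i j * y i j) ^+ 2 <=
  (\sum_i \sum_j x i j ^+ 2) * (\sum_i \sum_j y i j ^+ 2).
Proof. by rewrite !pair_big; exact: (cauchy_schwarz (fun t => x t.1 t.2)). Qed.

Lemma sqrtr_le (x y : R) : 0 <= y -> x <= y ^+ 2 -> Num.sqrt x <= y.
Proof. by move=> y0 xy; rewrite -(ger0_norm y0) -sqrtr_sqr ler_wsqrtr. Qed.

End SumOfSquares.

Section ColumnVectors.
Variable R : rcfType.
Implicit Types (m n : nat).

Definition dot n (x y : 'cV[R]_n) : R := (x^T *m y) 0 0.
Definition sqnorm n (x : 'cV[R]_n) : R := dot x x.

Lemma dotE n (x y : 'cV[R]_n) : dot x y = \sum_i x i 0 * y i 0.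
Proof. by rewrite /dot mxE; apply: eq_bigr => i _; rewrite mxE. Qed.

Lemma sqnormE n (x : 'cV[R]_n) : sqnorm x = \sum_i x i 0 ^+ 2.
Proof. by rewrite /sqnorm dotE; apply: eq_bigr => i _; rewrite expr2. Qed.

Lemma sqnorm_ge0 n (x : 'cV[R]_n) : 0 <= sqnorm x.
Proof. by rewrite sqnormE sumr_sqr_ge0. Qed.

Lemma sqnorm_eq0 n (x : 'cV[R]_n) : sqnorm x = 0 -> x = 0.
Proof.
rewrite sqnormE => /sumr_sqr_eq0 x0.
by apply/matrixP => i j; rewrite ord1 mxE x0.
Qed.

Lemma dotC n (x y : 'cV[R]_n) : dot x y = dot y x.
Proof. by rewrite !dotE; apply: eq_bigr => i _; rewrite mulrC. Qed.

Lemma dotDl n (x y z : 'cV[R]_n) : dot (x + y) z = dot x z + dot y z.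
Proof. by rewrite /dot linearD mulmxDl mxE. Qed.

Lemma dotZl n a (x z : 'cV[R]_n) : dot (a *: x) z = a * dot x z.
Proof. by rewrite /dot linearZ -scalemxAl mxE. Qed.

Lemma dotNl n (x z : 'cV[R]_n) : dot (- x) z = - dot x z.
Proof. by rewrite -scaleN1r dotZl mulN1r. Qed.

Lemma dotZr n a (x z : 'cV[R]_n) : dot x (a *: z) = a * dot x z.
Proof. by rewrite dotC dotZl dotC. Qed.

Lemma dotNr n (x z : 'cV[R]_n) : dot x (- z) = - dot x z.
Proof. by rewrite dotC dotNl dotC. Qed.

Lemma dot_mulmx m n (A : 'M[R]_(m, n)) x y : dot (A *m x) y = dot x (A^T *m y).
Proof. by rewrite /dot trmx_mul mulmxA. Qed.

Lemma sqnormD n (x y : 'cV[R]_n) :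
  sqnorm (x + y) = sqnorm x + 2 * dot x y + sqnorm y.
Proof. by rewrite /sqnorm !dotDl ![dot _ (_ + _)]dotC !dotDl (dotC y x); ring. Qed.

Lemma sqnormZ n a (x : 'cV[R]_n) : sqnorm (a *: x) = a ^+ 2 * sqnorm x.
Proof. by rewrite /sqnorm dotZl dotC dotZl mulrA expr2. Qed.

Lemma sqnormN n (x : 'cV[R]_n) : sqnorm (- x) = sqnorm x.
Proof. by rewrite /sqnorm dotNl dotNr opprK. Qed.

Lemma dot_sqr_le n (x y : 'cV[R]_n) : dot x y ^+ 2 <= sqnorm x * sqnorm y.
Proof. by rewrite dotE !sqnormE cauchy_schwarz. Qed.

Lemma sqnorm_orthomx m n (Q : 'M[R]_(m, n)) x :
  Q^T *m Q = 1%:M -> sqnorm (Q *m x) = sqnorm x.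
Proof. by move=> QTQ; rewrite /sqnorm dot_mulmx mulmxA QTQ mul1mx. Qed.

Lemma sqnorm_delta n (j : 'I_n) : sqnorm (delta_mx j 0 : 'cV[R]_n) = 1.
Proof.
rewrite sqnormE (bigD1 j) //= big1 => [|i /negPf ij]; rewrite mxE.
  by rewrite !eqxx expr1n addr0.
by rewrite ij expr0n.
Qed.

Lemma mulmx_delta_col m n (A : 'M[R]_(m, n)) j i :
  (A *m (delta_mx j 0 : 'cV_n)) i 0 = A i j.
Proof.
rewrite mxE (bigD1 j) //= big1 ?addr0 => [|k /negPf kj]; rewrite mxE.
  by rewrite !eqxx mulr1.
by rewrite kj mulr0.
Qed.

Lemma sqnorm_col_mx0 m n (x : 'cV[R]_n) : sqnorm (col_mx (0 : 'cV[R]_m) x) = sqnorm x.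
Proof.
rewrite !sqnormE big_split_ord /= big1 ?add0r => [|i _].
  by apply: eq_bigr => i _; rewrite col_mxEd.
by rewrite col_mxEu mxE expr0n.
Qed.

Lemma sum_sqr_orthomx m n (Q : 'M[R]_(m, n)) (y : 'I_n -> R) : Q^T *m Q = 1%:M ->
  \sum_a (\sum_i Q a i * y i) ^+ 2 = \sum_i y i ^+ 2.
Proof.
move=> QTQ; transitivity (sqnorm (Q *m \col_i y i)).
  rewrite sqnormE; apply: eq_bigr => a _; rewrite mxE; congr (_ ^+ 2).
  by apply: eq_bigr => i _; rewrite mxE.
by rewrite sqnorm_orthomx // sqnormE; apply: eq_bigr => i _; rewrite mxE.
Qed.

(* Witness: the reflection I - 2 w w^T / |w|^2 across w = v - e_0. *)
Lemma householder n (v : 'cV[R]_n.+1) : sqnorm v = 1 ->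
  exists Q : 'M[R]_n.+1, Q *m Q^T = 1%:M /\ Q *m delta_mx 0 0 = v.
Proof.
move=> v1; set e := delta_mx 0 0 : 'cV[R]_n.+1; set w := v - e.
have [w0|w_neq0] := eqVneq w 0.
  exists 1%:M; rewrite trmx1 !mul1mx; split=> //.
  by apply/eqP; rewrite eq_sym -subr_eq0 -/w w0.
have nw_neq0 : sqnorm w != 0 by apply: contra_neq w_neq0; exact: sqnorm_eq0.
have dwe : dot w e = dot v e - 1.
  by rewrite /w dotDl dotNl -/(sqnorm e) sqnorm_delta.
have nwE : sqnorm w = - 2 * dot w e.
  by rewrite dwe /w sqnormD sqnormN dotNr v1 sqnorm_delta; ring.
pose c := 2 / sqnorm w; pose H := 1%:M - c *: (w *m w^T).
have HT : H^T = H by rewrite /H linearB /= trmx1 linearZ /= trmx_mul trmxK.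
have wwT2 : (w *m w^T) *m (w *m w^T) = sqnorm w *: (w *m w^T).
  by rewrite -mulmxA (mulmxA w^T) [w^T *m w]mx11_scalar mul_scalar_mx -scalemxAr.
exists H; rewrite HT; split.
  rewrite /H mulmxBl mul1mx mulmxBr mulmx1 -scalemxAl -scalemxAr wwT2 !scalerA.
  have -> : c * c * sqnorm w = c + c by rewrite /c -mulrA mulfVK //; ring.
  by rewrite scalerDl opprB addrK subrK.
rewrite /H mulmxBl mul1mx -scalemxAl -mulmxA [w^T *m e]mx11_scalar.
rewrite mul_mx_scalar -/(dot w e) scalerA.
have -> : c * dot w e = -1.
  have dwe_neq0 : dot w e != 0.
    by apply: contra_neq nw_neq0 => dwe0; rewrite nwE dwe0 mulr0.
  by rewrite /c nwE; field.
by rewrite scaleN1r opprK /w addrC subrK.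
Qed.

End ColumnVectors.

(** * Singular value decomposition *)

Section Rayleigh.
Variable R : realType.

Lemma continuous_sumr (T : topologicalType) (I : finType) (F : I -> T -> R) :
  (forall i, continuous (F i)) -> continuous (fun x => \sum_i F i x).
Proof.
move=> F_cont; suff sum_cont (s : seq I) : continuous (fun x => \sum_(i <- s) F i x).
  exact: sum_cont.
elim: s => [|i s IH] x.
  by under eq_fun => y do rewrite big_nil; exact: cst_continuous.
by under eq_fun => y do rewrite big_cons; exact: (continuousD (F_cont i x) (IH x)).
Qed.

Lemma rayleigh_max m n (A : 'M[R]_(m, n.+1)) : exists v : 'cV[R]_n.+1,
  sqnorm v = 1 /\ forall w, sqnorm (A *m w) <= sqnorm (A *m v) * sqnorm w.
Proof.
pose f (r : 'rV[R]_n.+1) := sqnorm (A *m r^T).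
pose g (r : 'rV[R]_n.+1) := sqnorm r^T.
pose S := (g @^-1` [set x | x = 1])%classic.
have sqnorm_rowE (r : 'rV[R]_n.+1) : sqnorm r^T = \sum_i r 0 i ^+ 2.
  by rewrite sqnormE; apply: eq_bigr => i _; rewrite mxE.
have coord_cont i j : continuous (fun r : 'rV[R]_n.+1 => r i j).
  exact: coord_continuous.
have f_cont : continuous f.
  have -> : f = fun r => \sum_i (\sum_j A i j * r 0 j) ^+ 2.
    apply: funext => r; rewrite /f sqnormE; apply: eq_bigr => i _.
    by rewrite mxE; congr (_ ^+ 2); apply: eq_bigr => j _; rewrite mxE.
  apply: continuous_sumr => i x; under eq_fun => r do rewrite expr2.
  have lin_cont : continuous (fun r : 'rV[R]_n.+1 => \sum_j A i j * r 0 j).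
    apply: continuous_sumr => j y.
    by apply: continuousM; [exact: cst_continuous|exact: coord_cont].
  exact: (continuousM (lin_cont x) (lin_cont x)).
have S_closed : closed S.
  have g_cont : continuous g.
    rewrite /g; under eq_fun => r do rewrite sqnorm_rowE.
    apply: continuous_sumr => i x; under eq_fun => r do rewrite expr2.
    exact: (continuousM (coord_cont 0 i x) (coord_cont 0 i x)).
  by apply: preimage_closed; [move=> x _; exact: g_cont | exact: closed_eq].
have S_bounded : bounded_set S.
  rewrite /= /bounded_near; near=> M => r; rewrite /S /g /= => r1.
  rewrite -[`|r|]/(mx_norm r) mx_normrE; apply: (@le_trans _ _ 1).
    apply: bigmax_le => // -[i j] _ /=; rewrite ord1.
    rewrite -(expr_le1 (n := 2)) //= real_normK ?num_real //.
    rewrite -r1 sqnorm_rowE (bigD1 j) //= lerDl; exact: sumr_sqr_ge0.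
  near: M; apply: nbhs_pinfty_ge; exact: num_real.
have S0 : (S !=set0)%classic.
  by exists (delta_mx 0 0)^T; rewrite /S /g /= trmxK sqnorm_delta.
have [c Sc c_max] := EVT_max_rV S0 (bounded_closed_compact S_bounded S_closed)
  (continuous_subspaceT f_cont).
move: Sc; rewrite inE /S /g /= => c1; exists c^T; split=> // w.
have [w0|w_neq0] := eqVneq (sqnorm w) 0.
  by rewrite w0 mulr0 (sqnorm_eq0 w0) mulmx0 /sqnorm /dot !mulmx0 mxE.
have w_gt0 : 0 < sqnorm w by rewrite lt_def w_neq0 sqnorm_ge0.
pose t := Num.sqrt (sqnorm w); have t_gt0 : 0 < t by rewrite sqrtr_gt0.
have := c_max (t^-1 *: w)^T; rewrite !inE /S /g /f /= !trmxK -scalemxAr !sqnormZ.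
rewrite exprVn sqr_sqrtr ?sqnorm_ge0 // mulVf // => /(_ erefl).
by rewrite ler_pdivrMl // mulrC.
Unshelve. all: end_near.
Qed.

(* Cauchy-Schwarz and maximality give |A^T A v| <= |A v|^2, so the expansion of
   |A^T A v - |A v|^2 v|^2 is nonpositive. *)
Lemma rayleigh_max_eigen m n (A : 'M[R]_(m, n)) (v : 'cV[R]_n) :
  sqnorm v = 1 -> (forall w, sqnorm (A *m w) <= sqnorm (A *m v) * sqnorm w) ->
  A^T *m (A *m v) = sqnorm (A *m v) *: v.
Proof.
move=> v1 v_max; set l := sqnorm (A *m v); set x := A^T *m (A *m v).
have l_ge0 : 0 <= l by exact: sqnorm_ge0.
have xv : dot x v = l by rewrite /x dot_mulmx trmxK.
have x_le : sqnorm x <= l ^+ 2.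
  have x_ge0 := sqnorm_ge0 x.
  have xx : sqnorm x = dot (A *m v) (A *m x) by rewrite [LHS]dot_mulmx trmxK.
  have : sqnorm x ^+ 2 <= l ^+ 2 * sqnorm x.
    rewrite {1}xx; apply: le_trans (dot_sqr_le _ _) _.
    by rewrite -/l expr2 -mulrA; apply: ler_wpM2l.
  by nra.
have : sqnorm (x - l *: v) <= 0.
  by rewrite sqnormD sqnormN sqnormZ dotNr dotZr xv v1; lra.
rewrite le_eqVlt ltNge sqnorm_ge0 orbF => /eqP /sqnorm_eq0 /eqP.
by rewrite subr_eq0 => /eqP.
Qed.

End Rayleigh.

Section SingularValueDecomposition.
Variable R : realType.
Implicit Types (m n : nat) (d : nat -> R).

Definition rdiag_mx m n d : 'M[R]_(m, n) :=
  \matrix_(i < m, j < n) (if (i : nat) == j then d i else 0).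

Lemma is_sv_seq0 m n : is_sv_seq (0 : 'M[R]_(m, n)) (fun _ => 0).
Proof.
do 3!split=> //; exists 1%:M, 1%:M; rewrite !trmx1 !mulmx1 mul1mx.
by do 2!split=> //; apply/matrixP => i j; rewrite !mxE; case: eqP.
Qed.

Lemma is_sv_seq_orth m n (A : 'M[R]_(m, n)) (P : 'M[R]_m) (Q : 'M[R]_n) d :
  P *m P^T = 1%:M -> Q *m Q^T = 1%:M -> is_sv_seq (P^T *m A *m Q) d ->
  is_sv_seq A d.
Proof.
move=> PPT QQT [d_ge0 [d_mono [d_0 [U [V [UUT [VVT PAQ]]]]]]].
do 3!split=> //; exists (P *m U), (Q *m V).
have AE : A = P *m (P^T *m A *m Q) *m Q^T.
  by rewrite !mulmxA PPT mul1mx -mulmxA QQT mulmx1.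
split; first by rewrite trmx_mul mulmxA -(mulmxA P) UUT mulmx1.
split; first by rewrite trmx_mul mulmxA -(mulmxA Q) VVT mulmx1.
by rewrite AE PAQ trmx_mul !mulmxA.
Qed.

Lemma rdiag_mx_block m n d :
  rdiag_mx (1 + m) (1 + n) d = block_mx (d 0)%:M 0 0 (rdiag_mx m n (d \o S)).
Proof.
rewrite -[LHS]submxK; congr block_mx; apply/matrixP => i j; rewrite !mxE /=.
- by rewrite !ord1.
- by rewrite ord1 add1n.
- by rewrite ord1 add1n.
- by rewrite !add1n eqSS.
Qed.

Lemma is_sv_seq_block m n (A : 'M[R]_(m, n)) d s :
  is_sv_seq A d -> (forall k, d k <= s) ->
  is_sv_seq (block_mx s%:M 0 0 A : 'M_(1 + m, 1 + n))
            (fun k => if k is k'.+1 then d k' else s).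
Proof.
move=> [d_ge0 [d_mono [d_0 [U [V [UUT [VVT AE]]]]]]] d_le.
split; first by case=> //; exact: le_trans (d_ge0 0) (d_le 0).
split; first by case=> [|i] [|j] //= ij; first [exact: d_le | exact: d_mono].
split; first by case=> [|i]; rewrite minnSS // ltnS; exact: d_0.
pose lift k (W : 'M[R]_k) : 'M[R]_(1 + k) := block_mx 1%:M 0 0 W.
have liftT k (W : 'M[R]_k) : W *m W^T = 1%:M -> lift k W *m (lift k W)^T = 1%:M.
  move=> WWT; rewrite tr_block_mx mulmx_block !trmx0 !trmx1 !mul0mx !mulmx0.
  by rewrite !mulmx1 !addr0 !add0r WWT -scalar_mx_block.
exists (lift m U), (lift n V); split; [exact: liftT | split; [exact: liftT|]].
rewrite [X in _ *m X *m _](_ : _ = rdiag_mx (1 + m) (1 + n)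
  (fun k => if k is k'.+1 then d k' else s)) // rdiag_mx_block AE /=.
rewrite tr_block_mx !trmx0 !trmx1 !mulmx_block !mul0mx !mulmx0 !mul1mx !mulmx1.
by rewrite !addr0 !add0r mul0mx.
Qed.

Lemma sv_sqr_le m n (A : 'M[R]_(m, n)) (U : 'M[R]_m) (V : 'M[R]_n) d c :
  U *m U^T = 1%:M -> V *m V^T = 1%:M -> A = U *m rdiag_mx m n d *m V^T ->
  (forall x, sqnorm (A *m x) <= c * sqnorm x) ->
  forall i, (i < minn m n)%N -> d i ^+ 2 <= c.
Proof.
move=> UUT VVT -> A_le i; rewrite leq_min => /andP[im iN].
have := A_le (V *m delta_mx (Ordinal iN) 0).
have VTV := mulmx1C VVT; have UTU := mulmx1C UUT.
rewrite [sqnorm (V *m _)]sqnorm_orthomx // sqnorm_delta mulr1.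
rewrite -!mulmxA (mulmxA V^T) VTV mul1mx sqnorm_orthomx //.
apply: le_trans; rewrite sqnormE (bigD1 (Ordinal im)) //= mulmx_delta_col mxE eqxx.
by rewrite lerDl sumr_sqr_ge0.
Qed.

Lemma block_mx_e0_eigen m n (T : 'M[R]_(1 + m, 1 + n)) s :
  T *m delta_mx 0 0 = s *: (delta_mx 0 0 : 'cV_(1 + m)) ->
  T^T *m delta_mx 0 0 = s *: (delta_mx 0 0 : 'cV_(1 + n)) ->
  T = block_mx s%:M 0 0 (drsubmx T).
Proof.
move=> Te0 TTe0.
have col0 i : T i 0 = s * (i == 0)%:R.
  by rewrite -(mulmx_delta_col T 0 i) Te0 !mxE andbT.
have row0 j : T 0 j = s * (j == 0)%:R.
  have -> : T 0 j = T^T j 0 by rewrite mxE.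
  by rewrite -(mulmx_delta_col T^T 0 j) TTe0 !mxE andbT.
have lshift0 k : lshift k (0 : 'I_1) = 0 by exact: val_inj.
have rshift_neq0 k (j : 'I_k) : (rshift 1 j == 0 :> 'I_(1 + k)) = false.
  by rewrite -val_eqE /= add1n.
rewrite -[LHS]submxK; congr block_mx; apply/matrixP => i j; rewrite !ord1 !mxE /=.
- by rewrite !lshift0 col0 eqxx mulr1.
- by rewrite !lshift0 row0 rshift_neq0 mulr0.
- by rewrite !lshift0 col0 rshift_neq0 mulr0.
Qed.

Lemma exists_mx_neq0 m n (A : 'M[R]_(m, n)) : A != 0 -> exists i j, A i j != 0.
Proof.
move=> A_neq0; apply: contra_notP (negP A_neq0) => no_entry.
apply/eqP/matrixP => i j; rewrite mxE; apply/eqP.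
by apply: contra_notT no_entry => Aij; exists i, j.
Qed.

(* One step of the variational construction of the SVD: the maximiser v of
   |A v| / |v| and u := A v / |A v| are a pair of singular vectors, and reflections
   mapping them to e_0 split off the top singular value. *)
Lemma svd_deflation m n (A : 'M[R]_(1 + m, 1 + n)) : A != 0 ->
  exists (s : R) (A' : 'M[R]_(m, n)) (P : 'M[R]_(1 + m)) (Q : 'M[R]_(1 + n)),
  [/\ 0 < s, P *m P^T = 1%:M, Q *m Q^T = 1%:M,
      P^T *m A *m Q = block_mx s%:M 0 0 A' &
      forall x, sqnorm (A' *m x) <= s ^+ 2 * sqnorm x].
Proof.
move=> A_neq0; have [v [v1 v_max]] := rayleigh_max A.
set l := sqnorm (A *m v) in v_max.
have l_gt0 : 0 < l.
  have [i [j Aij]] := exists_mx_neq0 A_neq0.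
  have := v_max (delta_mx j 0 : 'cV_(1 + n)).
  rewrite sqnorm_delta mulr1; apply: lt_le_trans.
  rewrite sqnormE (bigD1 i) //= mulmx_delta_col ltr_pwDl ?sumr_sqr_ge0 //.
  by rewrite lt_def sqr_ge0 sqrf_eq0 Aij.
pose s := Num.sqrt l; have s_gt0 : 0 < s by rewrite sqrtr_gt0.
have s2 : s ^+ 2 = l by rewrite sqr_sqrtr // ltW.
pose u := s^-1 *: (A *m v).
have u1 : sqnorm u = 1 by rewrite sqnormZ exprVn s2 mulVf ?gt_eqF.
have Av : A *m v = s *: u by rewrite scalerA mulfV ?gt_eqF // scale1r.
have ATu : A^T *m u = s *: v.
  rewrite -scalemxAr rayleigh_max_eigen // -/l -s2 scalerA.
  by rewrite expr2 mulrA mulVf ?gt_eqF // mul1r.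
have [P [PPT Pe0]] := householder u1; have [Q [QQT Qe0]] := householder v1.
pose T : 'M[R]_(1 + m, 1 + n) := P^T *m A *m Q.
have Te0 : T *m delta_mx 0 0 = s *: (delta_mx 0 0 : 'cV_(1 + m)).
  by rewrite -mulmxA Qe0 -mulmxA Av -scalemxAr -Pe0 mulmxA (mulmx1C PPT) mul1mx.
have TTe0 : T^T *m delta_mx 0 0 = s *: (delta_mx 0 0 : 'cV_(1 + n)).
  rewrite !trmx_mul trmxK -!mulmxA Pe0 ATu -scalemxAr -Qe0 mulmxA.
  by rewrite (mulmx1C QQT) mul1mx.
exists s, (drsubmx T), P, Q; split=> //; first exact: block_mx_e0_eigen.
move=> x; rewrite s2; pose y := col_mx (0 : 'cV[R]_1) x.
have Ty : T *m y = col_mx 0 (drsubmx T *m x).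
  rewrite [T in T *m _](block_mx_e0_eigen Te0 TTe0) mul_block_col.
  by rewrite !mul0mx !mulmx0 !addr0 add0r.
have := v_max (Q *m y).
have -> : A *m (Q *m y) = P *m (T *m y) by rewrite /T !mulmxA PPT mul1mx.
rewrite [sqnorm (P *m _)]sqnorm_orthomx ?(mulmx1C PPT) //.
by rewrite [sqnorm (Q *m _)]sqnorm_orthomx ?(mulmx1C QQT) // Ty /y !(sqnorm_col_mx0 1).
Qed.

Lemma svd_exists m n (A : 'M[R]_(m, n)) : exists d, is_sv_seq A d.
Proof.
elim: m n A => [|m IH] n A.
  by exists (fun _ => 0); rewrite [A]flatmx0; exact: is_sv_seq0.
case: n A => [|n] A.
  by exists (fun _ => 0); rewrite [A]thinmx0; exact: is_sv_seq0.
have [->|A_neq0] := eqVneq A 0; first by exists (fun _ => 0); exact: is_sv_seq0.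
have [s [A' [P [Q [s_gt0 PPT QQT PAQ A'_le]]]]] := svd_deflation A_neq0.
have [d' svd'] := IH n A'.
have d'_le k : d' k <= s.
  case: svd' => d'_ge0 [_ [d'_0 [U [V [UUT [VVT A'E]]]]]].
  case: (ltnP k (minn m n)) => [k_lt|k_ge]; last by rewrite d'_0 // ltW.
  have := sv_sqr_le UUT VVT A'E A'_le k_lt; have := d'_ge0 k; nra.
exists (fun k => if k is k'.+1 then d' k' else s).
by apply: is_sv_seq_orth PPT QQT _; rewrite PAQ; exact: is_sv_seq_block.
Qed.

Lemma sv_seq_spec m n (A : 'M[R]_(m, n)) : is_sv_seq A (sv_seq A).
Proof. by apply: epsilon_spec; exact: svd_exists. Qed.

(* Row a of U^T A = D V^T is d_a times a row of the orthogonal V^T. *)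
Lemma left_singular_basis m n (A : 'M[R]_(m, n)) : exists U : 'M[R]_m,
  U *m U^T = 1%:M /\ forall a, \sum_c (U^T *m A) a c ^+ 2 = sv_seq A a ^+ 2.
Proof.
have [_ [_ [d_0 [U [V [UUT [VVT AE]]]]]]] := sv_seq_spec A.
set d := sv_seq A in d_0 AE *; exists U; split=> // a.
have UTA : U^T *m A = rdiag_mx m n d *m V^T.
  by rewrite AE !mulmxA (mulmx1C UUT) mul1mx.
rewrite UTA; case: (ltnP a n) => [an|na].
  have rowE c : (rdiag_mx m n d *m V^T) a c = d a * V c (Ordinal an).
    rewrite mxE (bigD1 (Ordinal an)) //= big1 => [|j /negPf ja]; rewrite !mxE.
      by rewrite eqxx addr0.
    by rewrite -val_eqE /= eq_sym in ja; rewrite ja mul0r.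
  have col_norm : \sum_c V c (Ordinal an) ^+ 2 = 1.
    have := congr1 (fun M : 'M[R]_n => M (Ordinal an) (Ordinal an)) (mulmx1C VVT).
    rewrite !mxE eqxx /= => VTV; rewrite -[RHS]VTV.
    by apply: eq_bigr => c _; rewrite mxE expr2.
  under eq_bigr => c _ do rewrite rowE exprMn.
  by rewrite -mulr_sumr col_norm mulr1.
rewrite d_0 ?expr0n /=; last exact: leq_trans (geq_minr _ _) na.
apply: big1 => c _; rewrite mxE big1 ?expr0n // => j _; rewrite !mxE.
by rewrite (gtn_eqF (leq_trans (ltn_ord j) na)) mul0r.
Qed.

End SingularValueDecomposition.

(** * Tucker products and the truncated HOSVD *)

Section ModeProducts.
Variable R : realType.
Implicit Types (p q r : nat).

Lemma tensor_ext p q r (T S : tensor R p q r) :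
  (forall i j k, T i j k = S i j k) -> T = S.
Proof. by move=> TS; apply: funext => i; apply: funext => j; apply: funext => k. Qed.

Definition mode1 p q r p' (Q : 'M[R]_(p', p)) (T : tensor R p q r) : tensor R p' q r :=
  fun a j k => \sum_i Q a i * T i j k.
Definition mode2 p q r q' (Q : 'M[R]_(q', q)) (T : tensor R p q r) : tensor R p q' r :=
  fun i b k => \sum_j Q b j * T i j k.
Definition mode3 p q r r' (Q : 'M[R]_(r', r)) (T : tensor R p q r) : tensor R p q r' :=
  fun i j c => \sum_k Q c k * T i j k.

Lemma tucker_modes r1 r2 r3 p q r (G : tensor R r1 r2 r3)
    (U1 : 'M[R]_(p, r1)) (U2 : 'M[R]_(q, r2)) (U3 : 'M[R]_(r, r3)) :
  tucker G U1 U2 U3 = mode1 U1 (mode2 U2 (mode3 U3 G)).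
Proof.
apply: tensor_ext => i j k; rewrite /tucker /mode1 /mode2 /mode3.
apply: eq_bigr => a _; rewrite mulr_sumr; apply: eq_bigr => b _.
by rewrite !mulr_sumr; apply: eq_bigr => c _; ring.
Qed.

Lemma mulmx_sumE m n l (P : 'M[R]_(m, n)) (Q : 'M[R]_(n, l)) (f : 'I_l -> R) a :
  \sum_b P a b * \sum_i Q b i * f i = \sum_i (P *m Q) a i * f i.
Proof.
under eq_bigr => b _ do rewrite mulr_sumr.
rewrite exchange_big; apply: eq_bigr => i _ /=; rewrite mxE mulr_suml.
by apply: eq_bigr => b _; rewrite mulrA.
Qed.

Lemma exchange_wsum m n (x : 'I_m -> R) (y : 'I_n -> R) (F : 'I_m -> 'I_n -> R) :
  \sum_i x i * \sum_j y j * F i j = \sum_j y j * \sum_i x i * F i j.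
Proof.
under eq_bigr => i _ do rewrite mulr_sumr.
rewrite exchange_big; apply: eq_bigr => j _ /=; rewrite mulr_sumr.
by apply: eq_bigr => i _; ring.
Qed.

Lemma mx1_sumE n (f : 'I_n -> R) a : \sum_i (1%:M : 'M[R]_n) a i * f i = f a.
Proof.
rewrite (bigD1 a) //= big1 => [|i /negPf ai]; rewrite mxE.
  by rewrite eqxx mul1r addr0.
by rewrite eq_sym ai mul0r.
Qed.

Section Algebra.
Variables (p q r : nat) (T : tensor R p q r).

Lemma mode1_mulmx p1 p2 (P : 'M[R]_(p2, p1)) (Q : 'M[R]_(p1, p)) :
  mode1 P (mode1 Q T) = mode1 (P *m Q) T.
Proof. by apply: tensor_ext => a j k; exact: mulmx_sumE. Qed.

Lemma mode2_mulmx q1 q2 (P : 'M[R]_(q2, q1)) (Q : 'M[R]_(q1, q)) :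
  mode2 P (mode2 Q T) = mode2 (P *m Q) T.
Proof. by apply: tensor_ext => i b k; exact: mulmx_sumE. Qed.

Lemma mode3_mulmx r1 r2 (P : 'M[R]_(r2, r1)) (Q : 'M[R]_(r1, r)) :
  mode3 P (mode3 Q T) = mode3 (P *m Q) T.
Proof. by apply: tensor_ext => i j c; exact: mulmx_sumE. Qed.

Lemma mode1_1 : mode1 1%:M T = T.
Proof. by apply: tensor_ext => a j k; exact: mx1_sumE. Qed.

Lemma mode2_1 : mode2 1%:M T = T.
Proof. by apply: tensor_ext => i b k; exact: mx1_sumE. Qed.

Lemma mode3_1 : mode3 1%:M T = T.
Proof. by apply: tensor_ext => i j c; exact: mx1_sumE. Qed.

Lemma mode12C p' q' (P : 'M[R]_(p', p)) (Q : 'M[R]_(q', q)) :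
  mode1 P (mode2 Q T) = mode2 Q (mode1 P T).
Proof. by apply: tensor_ext => a b k; exact: exchange_wsum. Qed.

Lemma mode13C p' r' (P : 'M[R]_(p', p)) (Q : 'M[R]_(r', r)) :
  mode1 P (mode3 Q T) = mode3 Q (mode1 P T).
Proof. by apply: tensor_ext => a j c; exact: exchange_wsum. Qed.

Lemma mode23C q' r' (P : 'M[R]_(q', q)) (Q : 'M[R]_(r', r)) :
  mode2 P (mode3 Q T) = mode3 Q (mode2 P T).
Proof. by apply: tensor_ext => i b c; exact: exchange_wsum. Qed.

End Algebra.

Lemma tucker_mulmx p1 q1 r1 p2 q2 r2 p q r (T : tensor R p q r)
    (P1 : 'M[R]_(p1, p)) (P2 : 'M[R]_(q1, q)) (P3 : 'M[R]_(r1, r))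
    (Q1 : 'M[R]_(p2, p1)) (Q2 : 'M[R]_(q2, q1)) (Q3 : 'M[R]_(r2, r1)) :
  tucker (tucker T P1 P2 P3) Q1 Q2 Q3 = tucker T (Q1 *m P1) (Q2 *m P2) (Q3 *m P3).
Proof.
rewrite !tucker_modes -mode13C -mode12C mode1_mulmx -mode23C mode2_mulmx.
by rewrite mode3_mulmx.
Qed.

Lemma tucker1 p q r (T : tensor R p q r) : tucker T 1%:M 1%:M 1%:M = T.
Proof. by rewrite tucker_modes mode3_1 mode2_1 mode1_1. Qed.

Lemma tuckerB r1 r2 r3 p q r (G H : tensor R r1 r2 r3)
    (U1 : 'M[R]_(p, r1)) (U2 : 'M[R]_(q, r2)) (U3 : 'M[R]_(r, r3)) :
  tucker (tsub G H) U1 U2 U3 = tsub (tucker G U1 U2 U3) (tucker H U1 U2 U3).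
Proof.
apply: tensor_ext => i j k; rewrite /tucker /tsub -sumrB; apply: eq_bigr => a _.
rewrite -sumrB; apply: eq_bigr => b _; rewrite -sumrB; apply: eq_bigr => c _; ring.
Qed.

End ModeProducts.

Section TensorNorm.
Variable R : realType.
Implicit Types (p q r : nat).

Definition tsqnorm p q r (T : tensor R p q r) : R := \sum_i \sum_j \sum_k T i j k ^+ 2.

Definition slice1 p q r (T : tensor R p q r) a : R := \sum_j \sum_k T a j k ^+ 2.
Definition slice2 p q r (T : tensor R p q r) b : R := \sum_i \sum_k T i b k ^+ 2.
Definition slice3 p q r (T : tensor R p q r) c : R := \sum_i \sum_j T i j c ^+ 2.

Lemma tsqnorm_slice2 p q r (T : tensor R p q r) : tsqnorm T = \sum_b slice2 T b.
Proof. by rewrite /tsqnorm exchange_big. Qed.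

Section Slices.
Variables (p q r : nat) (T : tensor R p q r).

Lemma slice1_mode2 q' (Q : 'M[R]_(q', q)) a : Q^T *m Q = 1%:M ->
  slice1 (mode2 Q T) a = slice1 T a.
Proof.
move=> QTQ; rewrite /slice1 /mode2 exchange_big [RHS]exchange_big /=.
by apply: eq_bigr => k _; exact: sum_sqr_orthomx.
Qed.

Lemma slice1_mode3 r' (Q : 'M[R]_(r', r)) a : Q^T *m Q = 1%:M ->
  slice1 (mode3 Q T) a = slice1 T a.
Proof. by move=> QTQ; apply: eq_bigr => j _; exact: sum_sqr_orthomx. Qed.

Lemma slice2_mode1 p' (Q : 'M[R]_(p', p)) b : Q^T *m Q = 1%:M ->
  slice2 (mode1 Q T) b = slice2 T b.
Proof.
move=> QTQ; rewrite /slice2 /mode1 exchange_big [RHS]exchange_big /=.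
by apply: eq_bigr => k _; exact: sum_sqr_orthomx.
Qed.

Lemma slice2_mode3 r' (Q : 'M[R]_(r', r)) b : Q^T *m Q = 1%:M ->
  slice2 (mode3 Q T) b = slice2 T b.
Proof. by move=> QTQ; apply: eq_bigr => i _; exact: sum_sqr_orthomx. Qed.

Lemma slice3_mode1 p' (Q : 'M[R]_(p', p)) c : Q^T *m Q = 1%:M ->
  slice3 (mode1 Q T) c = slice3 T c.
Proof.
move=> QTQ; rewrite /slice3 /mode1 exchange_big [RHS]exchange_big /=.
by apply: eq_bigr => j _; exact: sum_sqr_orthomx.
Qed.

Lemma slice3_mode2 q' (Q : 'M[R]_(q', q)) c : Q^T *m Q = 1%:M ->
  slice3 (mode2 Q T) c = slice3 T c.
Proof. by move=> QTQ; apply: eq_bigr => i _; exact: sum_sqr_orthomx. Qed.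

Lemma tsqnorm_mode1 p' (Q : 'M[R]_(p', p)) : Q^T *m Q = 1%:M ->
  tsqnorm (mode1 Q T) = tsqnorm T.
Proof.
by move=> QTQ; rewrite !tsqnorm_slice2; apply: eq_bigr => b _; exact: slice2_mode1.
Qed.

Lemma tsqnorm_mode2 q' (Q : 'M[R]_(q', q)) : Q^T *m Q = 1%:M ->
  tsqnorm (mode2 Q T) = tsqnorm T.
Proof. by move=> QTQ; apply: eq_bigr => a _; exact: slice1_mode2. Qed.

Lemma tsqnorm_mode3 r' (Q : 'M[R]_(r', r)) : Q^T *m Q = 1%:M ->
  tsqnorm (mode3 Q T) = tsqnorm T.
Proof. by move=> QTQ; apply: eq_bigr => a _; exact: slice1_mode3. Qed.

End Slices.

Lemma tsqnorm_tucker p' q' r' p q r (T : tensor R p q r)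
    (U1 : 'M[R]_(p', p)) (U2 : 'M[R]_(q', q)) (U3 : 'M[R]_(r', r)) :
  U1^T *m U1 = 1%:M -> U2^T *m U2 = 1%:M -> U3^T *m U3 = 1%:M ->
  tsqnorm (tucker T U1 U2 U3) = tsqnorm T.
Proof.
by move=> ? ? ?; rewrite tucker_modes tsqnorm_mode1 // tsqnorm_mode2 // tsqnorm_mode3.
Qed.

Lemma sum_mxvec_index m n (f : 'I_(m * n) -> R) :
  \sum_c f c = \sum_i \sum_j f (mxvec_index i j).
Proof.
rewrite (reindex (uncurry (@mxvec_index m n))).
  by rewrite pair_big; apply: eq_bigr => -[i j].
by have [g g1 g2] := curry_mxvec_bij m n; exists g => x _; [exact: g1|exact: g2].
Qed.

Section Unfoldings.
Variables (p q r : nat) (T : tensor R p q r).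

Lemma slice1_mode1_unfold1 p' (Q : 'M[R]_(p', p)) a :
  slice1 (mode1 Q T) a = \sum_c (Q *m unfold1 T) a c ^+ 2.
Proof.
rewrite sum_mxvec_index; apply: eq_bigr => j _; apply: eq_bigr => k _.
by rewrite mxE; congr (_ ^+ 2); apply: eq_bigr => i _; rewrite !mxE mxvecE mxE.
Qed.

Lemma slice2_mode2_unfold2 q' (Q : 'M[R]_(q', q)) b :
  slice2 (mode2 Q T) b = \sum_c (Q *m unfold2 T) b c ^+ 2.
Proof.
rewrite sum_mxvec_index; apply: eq_bigr => i _; apply: eq_bigr => k _.
by rewrite mxE; congr (_ ^+ 2); apply: eq_bigr => j _; rewrite !mxE mxvecE mxE.
Qed.

Lemma slice3_mode3_unfold3 r' (Q : 'M[R]_(r', r)) c :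
  slice3 (mode3 Q T) c = \sum_c' (Q *m unfold3 T) c c' ^+ 2.
Proof.
rewrite sum_mxvec_index; apply: eq_bigr => i _; apply: eq_bigr => j _.
by rewrite mxE; congr (_ ^+ 2); apply: eq_bigr => k _; rewrite !mxE mxvecE mxE.
Qed.

End Unfoldings.

Lemma slice1_tucker p' q' r' p q r (T : tensor R p q r)
    (U1 : 'M[R]_(p', p)) (U2 : 'M[R]_(q', q)) (U3 : 'M[R]_(r', r)) a :
  U2^T *m U2 = 1%:M -> U3^T *m U3 = 1%:M ->
  slice1 (tucker T U1 U2 U3) a = \sum_c (U1 *m unfold1 T) a c ^+ 2.
Proof.
move=> U2TU2 U3TU3; rewrite tucker_modes mode12C mode13C.
by rewrite slice1_mode2 // slice1_mode3 // slice1_mode1_unfold1.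
Qed.

Lemma slice2_tucker p' q' r' p q r (T : tensor R p q r)
    (U1 : 'M[R]_(p', p)) (U2 : 'M[R]_(q', q)) (U3 : 'M[R]_(r', r)) b :
  U1^T *m U1 = 1%:M -> U3^T *m U3 = 1%:M ->
  slice2 (tucker T U1 U2 U3) b = \sum_c (U2 *m unfold2 T) b c ^+ 2.
Proof.
move=> U1TU1 U3TU3; rewrite tucker_modes mode23C.
by rewrite slice2_mode1 // slice2_mode3 // slice2_mode2_unfold2.
Qed.

Lemma slice3_tucker p' q' r' p q r (T : tensor R p q r)
    (U1 : 'M[R]_(p', p)) (U2 : 'M[R]_(q', q)) (U3 : 'M[R]_(r', r)) c :
  U1^T *m U1 = 1%:M -> U2^T *m U2 = 1%:M ->
  slice3 (tucker T U1 U2 U3) c = \sum_c' (U3 *m unfold3 T) c c' ^+ 2.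
Proof.
move=> U1TU1 U2TU2; rewrite tucker_modes.
by rewrite slice3_mode1 // slice3_mode2 // slice3_mode3_unfold3.
Qed.

End TensorNorm.

Section TruncatedHOSVD.
Variable R : realType.
Implicit Types (p q r : nat).

Lemma pid_mx_sumE n k (f : 'I_n -> R) a :
  \sum_i (pid_mx k : 'M[R]_n) a i * f i = (a < k)%N%:R * f a.
Proof.
rewrite (bigD1 a) //= big1 => [|i /negPf ai]; rewrite mxE.
  by rewrite eqxx addr0.
by rewrite -val_eqE eq_sym in ai; rewrite ai mul0r.
Qed.

Lemma tucker_pid p q r (T : tensor R p q r) r1 r2 r3 a b c :
  tucker T (pid_mx r1) (pid_mx r2) (pid_mx r3) a b c
  = (a < r1)%N%:R * ((b < r2)%N%:R * ((c < r3)%N%:R * T a b c)).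
Proof.
by rewrite tucker_modes /mode1 pid_mx_sumE /mode2 pid_mx_sumE /mode3 pid_mx_sumE.
Qed.

(* An entry killed by the truncation lies in a discarded slice of some mode. *)
Lemma tsqnorm_truncation p q r (F : tensor R p q r) r1 r2 r3 :
  tsqnorm (tsub (tucker F (pid_mx r1) (pid_mx r2) (pid_mx r3)) F) <=
    \sum_(a < p | (r1 <= a)%N) slice1 F a + \sum_(b < q | (r2 <= b)%N) slice2 F b
  + \sum_(c < r | (r3 <= c)%N) slice3 F c.
Proof.
pose cut (P : bool) (x : R) := if P then x else 0.
have mask_le a b c :
  tsub (tucker F (pid_mx r1) (pid_mx r2) (pid_mx r3)) F a b c ^+ 2 <=
  cut (r1 <= a)%N (F a b c ^+ 2) + cut (r2 <= b)%N (F a b c ^+ 2)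
  + cut (r3 <= c)%N (F a b c ^+ 2).
  rewrite /tsub tucker_pid /cut (leqNgt r1 a) (leqNgt r2 b) (leqNgt r3 c).
  have := sqr_ge0 (F a b c).
  case: (a < r1)%N; case: (b < r2)%N; case: (c < r3)%N => /= F2_ge0;
  by rewrite ?mul1r ?mul0r ?subrr ?sub0r ?sqrrN ?expr0n /=; lra.
apply: le_trans.
  apply: ler_sum => a _; apply: ler_sum => b _; apply: ler_sum => c _.
  exact: mask_le.
under eq_bigr => a _ do under eq_bigr => b _ do rewrite !big_split.
under eq_bigr => a _ do rewrite !big_split.
have cut_sum (I J K : finType) (P : pred I) (g : I -> J -> K -> R) :
    \sum_i \sum_j \sum_k cut (P i) (g i j k) = \sum_(i | P i) \sum_j \sum_k g i j k.
  rewrite [RHS]big_mkcond; apply: eq_bigr => i _; rewrite /cut; case: (P i) => //.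
  by rewrite big1 // => j _; rewrite big1.
have S2 : \sum_(a < p) \sum_(b < q) \sum_(c < r) cut (r2 <= b)%N (F a b c ^+ 2)
    = \sum_(b < q | (r2 <= b)%N) \sum_a \sum_c F a b c ^+ 2.
  by rewrite exchange_big /= cut_sum.
have S3 : \sum_(a < p) \sum_(b < q) \sum_(c < r) cut (r3 <= c)%N (F a b c ^+ 2)
    = \sum_(c < r | (r3 <= c)%N) \sum_a \sum_b F a b c ^+ 2.
  rewrite -[in RHS]cut_sum [in RHS]exchange_big; apply: eq_bigr => a _ /=.
  exact: exchange_big.
by rewrite !big_split /= cut_sum S2 S3.
Qed.

Definition lsv_basis m n (A : 'M[R]_(m, n)) : 'M[R]_m :=
  proj1_sig (cid (left_singular_basis A)).

Lemma lsv_basis_orth m n (A : 'M[R]_(m, n)) : lsv_basis A *m (lsv_basis A)^T = 1%:M.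
Proof. by case: (proj2_sig (cid (left_singular_basis A))). Qed.

Lemma lsv_basis_energy m n (A : 'M[R]_(m, n)) a :
  \sum_c ((lsv_basis A)^T *m A) a c ^+ 2 = sv_seq A a ^+ 2.
Proof. by case: (proj2_sig (cid (left_singular_basis A))). Qed.

Definition sv_tail m n (A : 'M[R]_(m, n)) k : R :=
  \sum_(k.+1 <= t < m.+1) sigma A t ^+ 2.

Lemma sv_tailE m n (A : 'M[R]_(m, n)) k :
  sv_tail A k = \sum_(a < m | (k <= a)%N) sv_seq A a ^+ 2.
Proof.
by rewrite /sv_tail big_add1 /= big_geq_mkord big_mkcond [RHS]big_mkcond.
Qed.

Section Truncation.
Variables (p q r : nat) (E : tensor R p q r) (r1 r2 r3 : nat).

Definition hosvd_factor1 : 'M[R]_(p, r1) := lsv_basis (unfold1 E) *m pid_mx r1.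
Definition hosvd_factor2 : 'M[R]_(q, r2) := lsv_basis (unfold2 E) *m pid_mx r2.
Definition hosvd_factor3 : 'M[R]_(r, r3) := lsv_basis (unfold3 E) *m pid_mx r3.

Definition hosvd_core : tensor R r1 r2 r3 :=
  tucker E hosvd_factor1^T hosvd_factor2^T hosvd_factor3^T.

Theorem hosvd_error :
  tsqnorm (tsub (tucker hosvd_core hosvd_factor1 hosvd_factor2 hosvd_factor3) E) <=
  sv_tail (unfold1 E) r1 + sv_tail (unfold2 E) r2 + sv_tail (unfold3 E) r3.
Proof.
set U1 := lsv_basis (unfold1 E); set U2 := lsv_basis (unfold2 E).
set U3 := lsv_basis (unfold3 E).
have [U1U1T U2U2T U3U3T] :
    [/\ U1 *m U1^T = 1%:M, U2 *m U2^T = 1%:M & U3 *m U3^T = 1%:M].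
  by split; exact: lsv_basis_orth.
have [U1TU1 U2TU2 U3TU3] := And3 (mulmx1C U1U1T) (mulmx1C U2U2T) (mulmx1C U3U3T).
set F := tucker E U1^T U2^T U3^T.
have EF : E = tucker F U1 U2 U3 by rewrite tucker_mulmx U1U1T U2U2T U3U3T tucker1.
have projE m k (U : 'M[R]_m) :
    U *m (pid_mx k : 'M_(m, k)) *m (U *m pid_mx k)^T = U *m pid_mx k *m U^T.
  by rewrite trmx_mul tr_pid_mx mulmxA -(mulmxA U) mul_pid_mx !minnn.
have approxE : tucker hosvd_core hosvd_factor1 hosvd_factor2 hosvd_factor3
    = tucker (tucker F (pid_mx r1) (pid_mx r2) (pid_mx r3)) U1 U2 U3.
  by rewrite /hosvd_core !tucker_mulmx !projE.
rewrite approxE [X in tsub _ X]EF -tuckerB tsqnorm_tucker // !sv_tailE.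
apply: le_trans (tsqnorm_truncation F r1 r2 r3) _.
have -> : \sum_(a < p | (r1 <= a)%N) slice1 F a
    = \sum_(a < p | (r1 <= a)%N) sv_seq (unfold1 E) a ^+ 2.
  by apply: eq_bigr => a _; rewrite slice1_tucker ?trmxK // lsv_basis_energy.
have -> : \sum_(b < q | (r2 <= b)%N) slice2 F b
    = \sum_(b < q | (r2 <= b)%N) sv_seq (unfold2 E) b ^+ 2.
  by apply: eq_bigr => b _; rewrite slice2_tucker ?trmxK // lsv_basis_energy.
have -> : \sum_(c < r | (r3 <= c)%N) slice3 F c
    = \sum_(c < r | (r3 <= c)%N) sv_seq (unfold3 E) c ^+ 2.
  by apply: eq_bigr => c _; rewrite slice3_tucker ?trmxK // lsv_basis_energy.
by [].
Qed.

End Truncation.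

End TruncatedHOSVD.

Arguments hosvd_factor1 {R p q r} E r1.
Arguments hosvd_factor2 {R p q r} E r2.
Arguments hosvd_factor3 {R p q r} E r3.
Arguments hosvd_core {R p q r} E r1 r2 r3.
Arguments hosvd_error {R p q r} E r1 r2 r3.

(** * Perturbation of KANs *)

Section EuclideanNorm.
Variable R : realType.

Lemma ler_norm2D m (u v : 'I_m -> R) :
  norm2 (fun i => u i + v i) <= norm2 u + norm2 v.
Proof.
have [su sv] := (sqr_sqrtr (sumr_sqr_ge0 (index_enum _) xpredT u),
                 sqr_sqrtr (sumr_sqr_ge0 (index_enum _) xpredT v)).
rewrite /norm2; set a := Num.sqrt _ in su *; set c := Num.sqrt _ in sv *.
have [a_ge0 c_ge0] : 0 <= a /\ 0 <= c by split; exact: sqrtr_ge0.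
apply: sqrtr_le; first exact: addr_ge0.
have uv_le : \sum_i u i * v i <= a * c.
  have := cauchy_schwarz u v; rewrite -su -sv -exprMn => uv2.
  have ac_ge0 : 0 <= a * c by exact: mulr_ge0.
  nra.
have -> : \sum_i (u i + v i) ^+ 2 =
    \sum_i u i ^+ 2 + 2 * \sum_i u i * v i + \sum_i v i ^+ 2.
  by rewrite mulr_sumr -!big_split /=; apply: eq_bigr => i _; ring.
rewrite -su -sv; nra.
Qed.

End EuclideanNorm.

Section KANPerturbation.
Variables (R : realType) (nd : nat) (b : 'I_nd -> R -> R) (B Lb M : R).
Hypotheses (B_ge0 : 0 <= B) (Lb_ge0 : 0 <= Lb).
Hypothesis b_bounded : forall k x, `|b k x| <= B.
Hypothesis b_lipschitz : forall k, lipschitz_with Lb (b k).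

Lemma kan_layerB_param p q (A A' : tensor R p q nd) (z : 'I_p -> R) :
  norm2 (fun j => kan_layer b A z j - kan_layer b A' z j) <=
  B * Num.sqrt (p * nd)%:R * frob (tsub A A').
Proof.
have b_sqr : \sum_(i < p) \sum_(k < nd) b k (z i) ^+ 2 <= B ^+ 2 * (p * nd)%:R.
  apply: (@le_trans _ _ (\sum_(i < p) \sum_(k < nd) B ^+ 2)).
    apply: ler_sum => i _; apply: ler_sum => k _; rewrite -real_normK ?num_real //.
    by rewrite ler_pXn2r ?nnegrE // (le_trans _ (b_bounded k (z i))).
  by rewrite sumr_const card_ord sumr_const card_ord -mulrnA mulr_natr mulnC.
have row_le j : (kan_layer b A z j - kan_layer b A' z j) ^+ 2 <=
    B ^+ 2 * (p * nd)%:R * \sum_i \sum_k tsub A A' i j k ^+ 2.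
  have -> : kan_layer b A z j - kan_layer b A' z j =
      \sum_i \sum_k tsub A A' i j k * b k (z i).
    rewrite /kan_layer -sumrB; apply: eq_bigr => i _; rewrite -sumrB.
    by apply: eq_bigr => k _; rewrite /tsub mulrBl.
  apply: le_trans (cauchy_schwarz2 _ _) _; rewrite mulrC.
  by apply: ler_wpM2r => //; apply: sumr_ge0 => i _; exact: sumr_sqr_ge0.
apply: sqrtr_le; first by rewrite !mulr_ge0 ?sqrtr_ge0.
rewrite !exprMn !sqr_sqrtr ?ler0n ?sumr_sqr_ge0 //; last first.
  by apply: sumr_ge0 => i _; apply: sumr_ge0 => j _; exact: sumr_sqr_ge0.
apply: le_trans (ler_sum _ (fun j _ => row_le j)) _.
by rewrite -mulr_sumr exchange_big.
Qed.

Lemma kan_layerB_input p q (A : tensor R p q nd) (z z' : 'I_p -> R) :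
  norm2 (fun j => kan_layer b A z j - kan_layer b A z' j) <=
  frob A * Lb * Num.sqrt nd%:R * norm2 (fun i => z i - z' i).
Proof.
have b_sqr : \sum_(i < p) \sum_(k < nd) (b k (z i) - b k (z' i)) ^+ 2 <=
    Lb ^+ 2 * nd%:R * \sum_i (z i - z' i) ^+ 2.
  rewrite mulr_sumr; apply: ler_sum => i _.
  apply: (@le_trans _ _ (\sum_(k < nd) Lb ^+ 2 * (z i - z' i) ^+ 2)).
    apply: ler_sum => k _; rewrite -[X in X <= _]real_normK ?num_real //.
    rewrite -[(z i - z' i) ^+ 2]real_normK ?num_real // -exprMn.
    by rewrite ler_pXn2r ?nnegrE ?mulr_ge0 // b_lipschitz.
  by rewrite sumr_const card_ord [X in _ <= X]mulrAC mulr_natr.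
have row_le j : (kan_layer b A z j - kan_layer b A z' j) ^+ 2 <=
    (\sum_i \sum_k A i j k ^+ 2) * (Lb ^+ 2 * nd%:R * \sum_i (z i - z' i) ^+ 2).
  have -> : kan_layer b A z j - kan_layer b A z' j =
      \sum_i \sum_k A i j k * (b k (z i) - b k (z' i)).
    rewrite /kan_layer -sumrB; apply: eq_bigr => i _; rewrite -sumrB.
    by apply: eq_bigr => k _; rewrite mulrBr.
  apply: le_trans (cauchy_schwarz2 _ _) _.
  by apply: ler_wpM2l => //; apply: sumr_ge0 => i _; exact: sumr_sqr_ge0.
apply: sqrtr_le; first by rewrite !mulr_ge0 ?sqrtr_ge0.
rewrite !exprMn /frob !sqr_sqrtr ?ler0n ?sumr_sqr_ge0 //; last first.
  by apply: sumr_ge0 => i _; apply: sumr_ge0 => j _; exact: sumr_sqr_ge0.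
apply: le_trans (ler_sum _ (fun j _ => row_le j)) _.
by rewrite -mulr_suml exchange_big /= !mulrA.
Qed.

Lemma kan_z_perturbation (n : nat -> nat)
    (Aft Atg : forall l, tensor R (n l) (n l.+1) nd) (x : 'I_(n 0) -> R) k :
  (forall l, (l < k)%N -> frob (Atg l) <= M) ->
  norm2 (fun q => @kan_z R n nd b Aft x k q - @kan_z R n nd b Atg x k q) <=
  \sum_(l < k) ((M * Lb * Num.sqrt nd%:R) ^+ (k - l.+1) * B
                 * Num.sqrt (n l * nd)%:R) * frob (tsub (Aft l) (Atg l)).
Proof.
elim: k => [_|k IH Atg_le].
  by rewrite big_ord0 /norm2 big1 ?sqrtr0 // => i _; rewrite subrr expr0n.
set K := M * Lb * Num.sqrt nd%:R.
have K_ge0 : 0 <= K.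
  by rewrite !mulr_ge0 ?sqrtr_ge0 // (le_trans _ (Atg_le 0 _)) ?sqrtr_ge0.
set zf := @kan_z R n nd b Aft x k; set zt := @kan_z R n nd b Atg x k.
have -> : (fun q => @kan_z R n nd b Aft x k.+1 q - @kan_z R n nd b Atg x k.+1 q) =
    (fun q => (kan_layer b (Aft k) zf q - kan_layer b (Atg k) zf q)
            + (kan_layer b (Atg k) zf q - kan_layer b (Atg k) zt q)).
  by apply: funext => q /=; rewrite /zf /zt addrA subrK.
apply: le_trans (ler_norm2D _ _) _.
rewrite big_ord_recr /= subnn expr0 mul1r addrC; apply: lerD.
  exact: kan_layerB_param.
apply: le_trans (kan_layerB_input _ _ _) _.
apply: (@le_trans _ _ (K * norm2 (fun i => zf i - zt i))).
  apply: ler_wpM2r; first exact: sqrtr_ge0.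
  by rewrite ler_wpM2r ?sqrtr_ge0 // ler_wpM2r // Atg_le.
apply: le_trans (ler_wpM2l K_ge0 (IH (fun l lk => Atg_le l (ltnW lk)))) _.
rewrite mulr_sumr; apply: ler_sum => l _.
by rewrite !mulrA -exprS subSS subnSK.
Qed.

End KANPerturbation.

(* Layers are indexed 0-based: paper's layer l (1-based) is l0 = l-1 here,
   with widths n l0 = n_l, n l0.+1 = n_{l+1}. *)
Theorem theorem1 (R : realType) (L : nat) (n : nat -> nat) (nd : nat)
  (b : 'I_nd -> R -> R) (B Lb M : R)
  (Apt Atg : forall l : nat, tensor R (n l) (n l.+1) nd)
  (r1 r2 r3 : nat -> nat) :
  0 < B -> 0 < M -> 0 < Lb ->
  (forall k, smooth (b k)) ->
  (forall k z, `|b k z| <= B) ->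
  (forall k, lipschitz_with Lb (b k)) ->
  (forall l, (l < L)%N -> frob (Atg l) <= M) ->
  (forall l, (l < L)%N -> frob (Apt l) <= M) ->
  (forall l, (l < L)%N ->
     [/\ (1 <= r1 l <= n l)%N, (1 <= r2 l <= n l.+1)%N & (1 <= r3 l <= nd)%N]) ->
  exists (G : forall l : nat, tensor R (r1 l) (r2 l) (r3 l))
         (U1 : forall l : nat, 'M[R]_(n l, r1 l))
         (U2 : forall l : nat, 'M[R]_(n l.+1, r2 l))
         (U3 : forall l : nat, 'M[R]_(nd, r3 l)),
    forall x : 'I_(n 0%N) -> R,
      norm2 (fun q => kan L b (fun l => tadd (Apt l)
                                 (tucker (G l) (U1 l) (U2 l) (U3 l))) x q
                      - kan L b Atg x q)
      <= \sum_(l < L)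
           ((M * Lb * Num.sqrt nd%:R) ^+ (L - l.+1) * B
              * Num.sqrt ((n l * nd)%:R))
           * Num.sqrt (
               \sum_((r1 l).+1 <= r < (n l).+1)
                  sigma (unfold1 (tsub (Atg l) (Apt l))) r ^+ 2
             + \sum_((r2 l).+1 <= r < (n l.+1).+1)
                  sigma (unfold2 (tsub (Atg l) (Apt l))) r ^+ 2
             + \sum_((r3 l).+1 <= r < nd.+1)
                  sigma (unfold3 (tsub (Atg l) (Apt l))) r ^+ 2).
Proof.
move=> B_gt0 M_gt0 Lb_gt0 _ b_bounded b_lipschitz Atg_le _ _.
pose E l := tsub (Atg l) (Apt l).
exists (fun l => hosvd_core (E l) (r1 l) (r2 l) (r3 l)),
  (fun l => hosvd_factor1 (E l) (r1 l)), (fun l => hosvd_factor2 (E l) (r2 l)),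
  (fun l => hosvd_factor3 (E l) (r3 l)) => x.
apply: le_trans (kan_z_perturbation (ltW B_gt0) (ltW Lb_gt0) b_bounded b_lipschitz
  _ x Atg_le) _.
apply: ler_sum => l _; apply: ler_wpM2l.
  have K_ge0 : 0 <= M * Lb * Num.sqrt nd%:R by rewrite !mulr_ge0 ?sqrtr_ge0 ?ltW.
  by rewrite !mulr_ge0 ?exprn_ge0 ?sqrtr_ge0 // ltW.
set X := tucker _ _ _ _.
have -> : tsub (tadd (Apt l) X) (Atg l) = tsub X (E l).
  by apply: tensor_ext => i j k; rewrite /E /tsub /tadd; ring.
exact/ler_wsqrtr/hosvd_error.
Qed.
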